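(* There is an absolute constant $c>0$ such that the following holds. Let $n\ge 1$, $d\ge 1$, $t\ge 0$, and let $Q$ be any quantum circuit on $n$ qubits of depth $d$ whose gates are Clifford gates (from $\{H, S, \mathrm{CNOT}\}$) together with exactly $t$ gates $T=\mathrm{diag}(1,e^{i\pi/4})$. Then there exists a classical circuit $C:\{0,1\}^n\to\{0,1\}^n$, built from $\mathrm{NOT}$, $\mathrm{AND}$, $\mathrm{OR}$ gates of fan-in at most $2$ (arbitrary fan-out), of depth at most $c\,(d+t)$, that p-simulates $Q$; that is, for every $x\in\{0,1\}^n$, $\langle C(x)|\,Q\,|x\rangle\neq 0$.
   Context: The quantum circuit $Q$ takes as input a computational basis state $|x\rangle$, $x\in\{0,1\}^n$, on its $n$ qubit lines and all $n$ qubits are measured in the computational basis at the end; the unitary implemented by the circuit is also denoted $Q$. The depth of a quantum circuit is its number of layers of gates acting on disjoint qubits. $H$ is the Hadamard gate, $S=\mathrm{diag}(1,i)$, and $\mathrm{CNOT}$ is the controlled-NOT gate. The circuit $Q$ defines the relation $\mathcal{R}(Q)=\{(x,y)\in\{0,1\}^n\times\{0,1\}^n : \langle y|Q|x\rangle\neq 0\}$, and a classical circuit $C:\{0,1\}^n\to\{0,1\}^n$ is said to p-simulate $Q$ if $(x,C(x))\in\mathcal{R}(Q)$ for all $x\in\{0,1\}^n$. The depth of a classical circuit is the length of its longest input-to-output path of gates. *)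

(* Amplitudes live in algC (algebraic complex numbers),
   which contains 1/sqrt 2, i and e^{i pi/4} = (1+i)/sqrt 2. *)
From mathcomp Require Import all_boot all_order all_algebra.
From mathcomp Require Import algC.
Set Implicit Arguments. Unset Strict Implicit. Unset Printing Implicit Defensive.
Import Order.TTheory GRing.Theory Num.Theory.
Local Open Scope ring_scope.

Definition bits (n : nat) := {ffun 'I_n -> bool}.

Definition flip n (x : bits n) (i : 'I_n) : bits n :=
  [ffun j => if j == i then ~~ x i else x j].

Inductive gate (n : nat) : Type :=
| GH of 'I_n
| GS of 'I_n
| GT of 'I_n
| GCNOT of 'I_n & 'I_n.  (* control, target *)

Definition gate_support n (g : gate n) : seq 'I_n :=
  match g with
  | GH i | GS i | GT i => [:: i]
  | GCNOT c t => [:: c; t]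
  end.

Definition is_T n (g : gate n) : bool := if g is GT _ then true else false.

(* operators on n qubits, given by their matrix entries <y|A|x> *)
Definition op n := bits n -> bits n -> algC.

Definition op_id n : op n := fun y x => (y == x)%:R.
Definition op_mul n (A B : op n) : op n := fun y x => \sum_(z : bits n) A y z * B z x.

Definition same_off n (i : 'I_n) (y x : bits n) : bool :=
  [forall j, (j != i) ==> (y j == x j)].

Definition omega8 : algC := (1 + 'i) / sqrtC 2.

Definition gate_amp n (g : gate n) : op n := fun y x =>
  match g with
  | GH i => if same_off i y x then (if x i && y i then -1 else 1) / sqrtC 2 else 0
  | GS i => (y == x)%:R * (if x i then 'i else 1)
  | GT i => (y == x)%:R * (if x i then omega8 else 1)
  | GCNOT c t => (y == (if x c then flip x t else x))%:R
  end.

Definition layer n := seq (gate n).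

Definition layer_ok n (L : layer n) : bool :=
  (0 < size L)%N && uniq (flatten (map (@gate_support n) L)).

Definition layer_amp n (L : layer n) : op n :=
  foldr (fun g A => op_mul (gate_amp g) A) (@op_id n) L.

(* a circuit: list of layers, the head layer is applied first *)
Definition qcircuit n := seq (layer n).

Definition qcircuit_ok n (Q : qcircuit n) : bool := all (@layer_ok n) Q.

Definition qdepth n (Q : qcircuit n) : nat := size Q.

Definition T_count n (Q : qcircuit n) : nat :=
  sumn (map (fun L => count (@is_T n) L) Q).

Fixpoint qc_amp n (Q : qcircuit n) : op n :=
  match Q with
  | [::] => @op_id n
  | L :: Q' => op_mul (qc_amp Q') (layer_amp L)
  end.

(* Classical circuits over {NOT, AND, OR}, fan-in <= 2, arbitrary fan-out.
   A circuit with outputs y_1..y_n is represented by the unfolding of each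
   output into a formula; unfolding a DAG preserves the lengths of all
   input-to-output paths, so the circuit depth is the maximum formula depth. *)
Inductive bform (n : nat) : Type :=
| BVar of 'I_n
| BNot of bform n
| BAnd of bform n & bform n
| BOr of bform n & bform n.

Fixpoint beval n (f : bform n) (x : bits n) : bool :=
  match f with
  | BVar i => x i
  | BNot f => ~~ beval f x
  | BAnd f g => beval f x && beval g x
  | BOr f g => beval f x || beval g x
  end.

Fixpoint bdepth n (f : bform n) : nat :=
  match f with
  | BVar _ => 0
  | BNot f => (bdepth f).+1
  | BAnd f g | BOr f g => (maxn (bdepth f) (bdepth g)).+1
  end.

Definition ccircuit n := 'I_n -> bform n.

Definition ceval n (C : ccircuit n) (x : bits n) : bits n :=
  [ffun i => beval (C i) x].

Definition cdepth n (C : ccircuit n) : nat := \max_(i < n) bdepth (C i).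

Definition p_simulates n (C : ccircuit n) (Q : qcircuit n) : Prop :=
  forall x : bits n, qc_amp Q (ceval C x) x != 0.

From mathcomp Require Import all_boot all_algebra algC.
From mathcomp Require Import zify ring.
From Stdlib Require Import FunctionalExtensionality.
Set Implicit Arguments. Unset Strict Implicit. Unset Printing Implicit Defensive.
Import GRing.Theory Num.Theory.
Local Open Scope ring_scope.

(* Write |x> = X^x |0>.  Pushed from the input side through a Clifford gate,
   a Pauli operator X^a Z^b becomes another one, up to a nonzero phase, whose
   bits are XORs of the old bits; pushed through T it turns T into T^dagger
   exactly when its X-bit on that qubit is set.  Hence Q|x> = l X^a Z^b Q_s|0>
   with l <> 0, where the "Pauli frame" a, b and the bits s read at the T gates
   are XORs of the input bits gaining one level of XOR per layer, and Q_s is Q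
   with the T gates selected by s daggered.  Q_s is invertible, so Q_s|0> has a
   nonzero entry w_s, and y = a XOR w_s satisfies <y|Q|x> <> 0.  A classical
   circuit computes a in depth 3d + O(1) and looks w_s up from the t bits s
   with a multiplexer of depth 2t + O(1). *)

Section Amplitudes.
Variable n : nat.
Implicit Types (x y z : bits n) (a b : 'I_n -> bool) (q c t : 'I_n).

Definition vec := bits n -> algC.
Implicit Types (v w : vec).

Definition apply_op (A : op n) v : vec := fun y => \sum_z A y z * v z.

Definition basis x : vec := fun y => (y == x)%:R.

Lemma sum_delta y (F : bits n -> algC) : \sum_z (y == z)%:R * F z = F y.
Proof.
rewrite (bigD1 y) //= eqxx mul1r big1 ?addr0 // => z zy.
by rewrite eq_sym (negbTE zy) mul0r.
Qed.

Lemma apply_op_id v : apply_op (@op_id n) v = v.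
Proof. by apply: functional_extensionality => y; apply: sum_delta. Qed.

Lemma apply_op_mul A B v : apply_op (op_mul A B) v = apply_op A (apply_op B v).
Proof.
apply: functional_extensionality => y; rewrite /apply_op.
under eq_bigr do rewrite mulr_suml.
rewrite exchange_big; apply: eq_bigr => u _; rewrite mulr_sumr.
by apply: eq_bigr => z _; rewrite mulrA.
Qed.

Lemma qc_amp_basis Q y x : qc_amp Q y x = apply_op (qc_amp Q) (basis x) y.
Proof.
rewrite /apply_op -(sum_delta x (qc_amp Q y)).
by apply: eq_bigr => z _; rewrite mulrC eq_sym.
Qed.

Definition xorbits y a : bits n := [ffun j => y j (+) a j].
Definition setbit y q (e : bool) : bits n := finfun [eta y with q |-> e].
Definition cnot_bits c t y : bits n := finfun [eta y with t |-> y t (+) y c].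

Lemma xorbitsK a : involutive (xorbits ^~ a).
Proof. by move=> y; apply/ffunP => j; rewrite !ffunE addbK. Qed.

Lemma setbit_id y q : setbit y q (y q) = y.
Proof. by apply/ffunP => j; rewrite ffunE /=; case: (j =P q) => [->|]. Qed.

Lemma setbit_setbit y q e e' : setbit (setbit y q e) q e' = setbit y q e'.
Proof. by apply/ffunP => j; rewrite !ffunE /=; case: ifP => // jq; rewrite ffunE /= jq. Qed.

Lemma same_off_setbit y q e : same_off q y (setbit y q e).
Proof. by apply/forallP => j; apply/implyP => jq; rewrite ffunE /= (negbTE jq). Qed.

Lemma same_off_eq_setbit y z q : same_off q y z -> z = setbit y q (z q).
Proof.
move/forallP => yz; apply/ffunP => j; rewrite ffunE /=.
by case: eqP => [->|/eqP jq] //; move/implyP: (yz j) => /(_ jq) /eqP.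
Qed.

Lemma xorbits_setbit y q e a a' : (forall j, j != q -> a' j = a j) ->
  xorbits (setbit y q e) a = setbit (xorbits y a') q (e (+) a q).
Proof.
move=> aa'; apply/ffunP => j; rewrite !ffunE /=.
by case: eqP => [->|/eqP jq] //; rewrite ffunE aa'.
Qed.

Lemma cnot_bitsK c t : c != t -> involutive (cnot_bits c t).
Proof.
move=> ct y; apply/ffunP => j; rewrite !ffunE /=.
case: ifP => [/eqP ->|jt]; first by rewrite eqxx (negbTE ct) addbK.
by rewrite ffunE /= jt.
Qed.

Lemma cnot_bitsE c t x : c != t -> (if x c then flip x t else x) = cnot_bits c t x.
Proof.
move=> ct; apply/ffunP => j; rewrite [RHS]ffunE /=.
have [->|jt] := eqVneq j t; case: ifP => xc;
  by rewrite ?ffunE /= ?eqxx ?(negbTE jt) ?xc ?addbT ?addbF.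
Qed.

Lemma cnot_bits_xor c t y a : c != t ->
  cnot_bits c t (xorbits y [eta a with t |-> a t (+) a c]) = xorbits (cnot_bits c t y) a.
Proof.
move=> ct; apply/ffunP => j; rewrite !ffunE /=.
case: ifP => [/eqP ->|jt]; last by rewrite !ffunE /= jt.
by rewrite eqxx (negbTE ct); case: (y t); case: (y c); case: (a t); case: (a c).
Qed.

Lemma apply_H q v y : apply_op (gate_amp (GH q)) v y =
  (v (setbit y q false) + (-1) ^+ y q * v (setbit y q true)) / sqrtC 2.
Proof.
have neq_setbit : setbit y q true != setbit y q false.
  by apply/eqP => /ffunP /(_ q); rewrite !ffunE /= eqxx.
rewrite /apply_op (bigD1 (setbit y q false)) // (bigD1 (setbit y q true)) //=.
rewrite big1 => [|z /andP [z0 z1]]; last first.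
  case: ifP => [/same_off_eq_setbit yz|_]; last by rewrite mul0r.
  by move: z0 z1; rewrite yz; case: (z q); rewrite eqxx.
rewrite !same_off_setbit !ffunE /= !eqxx addr0.
by case: (y q); rewrite /= ?expr0 ?expr1; ring.
Qed.

Lemma apply_S q v y : apply_op (gate_amp (GS q)) v y = 'i ^+ y q * v y.
Proof.
rewrite /apply_op -(sum_delta y (fun z => 'i ^+ z q * v z)).
by apply: eq_bigr => z _ /=; rewrite mulrA; case: (z q); rewrite ?expr1 ?expr0.
Qed.

Definition t_phase (dag : bool) : algC := if dag then omega8^-1 else omega8.

Definition t_act q (dag : bool) v : vec := fun y => t_phase dag ^+ y q * v y.

Lemma omega8_neq0 : omega8 != 0.
Proof.
rewrite mulf_neq0 ?invr_eq0 ?sqrtC_eq0 ?pnatr_eq0 //; apply/eqP => one_i0.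
have := Re_rect (@real1 algC) (@real1 algC).
by rewrite mulr1 one_i0 raddf0 => /eqP; rewrite eq_sym oner_eq0.
Qed.

Lemma apply_T q : apply_op (gate_amp (GT q)) = t_act q false.
Proof.
apply: functional_extensionality => v; apply: functional_extensionality => y.
rewrite /apply_op /t_act -(sum_delta y (fun z => t_phase false ^+ z q * v z)).
by apply: eq_bigr => z _ /=; rewrite mulrA; case: (z q); rewrite ?expr1 ?expr0.
Qed.

Lemma apply_CNOT c t v y : c != t ->
  apply_op (gate_amp (GCNOT c t)) v y = v (cnot_bits c t y).
Proof.
move=> ct; rewrite /apply_op -(sum_delta (cnot_bits c t y) v).
apply: eq_bigr => z _ /=; rewrite cnot_bitsE //; congr (_%:R * _).
by rewrite (can2_eq (cnot_bitsK ct) (cnot_bitsK ct)).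
Qed.

(* [run G s v] applies the gates of [G] to [v], the last one first.  The
   k-th T gate met (counting from the output side) is replaced by T^dagger
   when the k-th bit of [s] is set; [run G [::]] is the circuit itself. *)
Fixpoint run (G : seq (gate n)) (s : seq bool) v : vec :=
  match G with
  | [::] => v
  | GT q :: G' => t_act q (head false s) (run G' (behead s) v)
  | g :: G' => apply_op (gate_amp g) (run G' s v)
  end.

Lemma run_cat G1 G2 v : run (G1 ++ G2) [::] v = run G1 [::] (run G2 [::] v).
Proof. by elim: G1 => [|[q|q|q|c t] G IH] //=; rewrite IH. Qed.

Lemma apply_op_scale A (l : algC) v :
  apply_op A (fun z => l * v z) = fun y => l * apply_op A v y.
Proof.
apply: functional_extensionality => y; rewrite /apply_op mulr_sumr.
by apply: eq_bigr => z _; rewrite mulrCA.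
Qed.

Definition circuit_gates (Q : qcircuit n) : seq (gate n) := flatten (rev Q).

Lemma apply_qc_amp Q v : apply_op (qc_amp Q) v = run (circuit_gates Q) [::] v.
Proof.
have apply_layer L w : apply_op (layer_amp L) w = run L [::] w.
  elim: L => [|g L IH] /=; first exact: apply_op_id.
  by rewrite apply_op_mul IH; case: g => //= q; rewrite apply_T.
elim: Q v => [|L Q IH] v /=; first exact: apply_op_id.
by rewrite apply_op_mul IH apply_layer /circuit_gates rev_cons flatten_rcons run_cat.
Qed.

Lemma t_act_neq0 q dag v y : v y != 0 -> t_act q dag v y != 0.
Proof.
move=> vy; rewrite mulf_neq0 // expf_neq0 //.
by case: dag; rewrite /t_phase ?invr_eq0 omega8_neq0.
Qed.

Lemma apply_gate_neq0 g v : uniq (gate_support g) -> (exists z, v z != 0) ->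
  exists y, apply_op (gate_amp g) v y != 0.
Proof.
case: g => [q|q|q|c t] wf_g [z vz].
- have sqrt2_neq0 : sqrtC 2 != 0 :> algC by rewrite sqrtC_eq0 pnatr_eq0.
  set u0 := v (setbit z q false); set u1 := v (setbit z q true).
  have out0 : apply_op (gate_amp (GH q)) v (setbit z q false) = (u0 + u1) / sqrtC 2.
    by rewrite apply_H !setbit_setbit ffunE /= eqxx expr0 mul1r.
  have out1 : apply_op (gate_amp (GH q)) v (setbit z q true) = (u0 - u1) / sqrtC 2.
    by rewrite apply_H !setbit_setbit ffunE /= eqxx expr1 mulN1r.
  have [/eqP|sum_neq0] := eqVneq (u0 + u1) 0; last first.
    by exists (setbit z q false); rewrite out0 mulf_neq0 ?invr_eq0.
  rewrite addr_eq0 => /eqP u0N; exists (setbit z q true).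
  rewrite out1 mulf_neq0 ?invr_eq0 // u0N -opprD oppr_eq0 -mulr2n mulrn_eq0 /=.
  by move: vz; rewrite -(setbit_id z q); case: (z q); rewrite -/u0 -/u1 // u0N oppr_eq0.
- by exists z; rewrite apply_S mulf_neq0 // expf_neq0 // neq0Ci.
- by exists z; rewrite apply_T t_act_neq0.
- move: wf_g; rewrite /= inE andbT => ct.
  by exists (cnot_bits c t z); rewrite apply_CNOT // cnot_bitsK.
Qed.

Lemma run_neq0 G s v : all (fun g => uniq (gate_support g)) G ->
  (exists z, v z != 0) -> exists y, run G s v y != 0.
Proof.
move=> + v_neq0; elim: G s => [|g G IH] s //= /andP [wf_g /IH run_neq0].
case: g wf_g => [q|q|q|c t] wf_g; try exact: apply_gate_neq0.
by have [y ry] := run_neq0 (behead s); exists y; apply: t_act_neq0.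
Qed.

Lemma circuit_gates_wf Q : qcircuit_ok Q ->
  all (fun g => uniq (gate_support g)) (circuit_gates Q).
Proof.
have layer_wf (L : layer n) : uniq (flatten (map (@gate_support n) L)) ->
    all (fun g => uniq (gate_support g)) L.
  by elim: L => [|g L IH] //=; rewrite cat_uniq => /and3P [-> _ /IH].
elim: Q => [|L Q IH] //= /andP [/andP [_ /layer_wf L_wf] /IH Q_wf].
by rewrite /circuit_gates rev_cons flatten_rcons all_cat Q_wf.
Qed.

End Amplitudes.

Section Frame.
Variables (n : nat) (T : Type) (xr : T -> T -> T).

(* A frame (a, b) stands for X^a Z^b; [xr] is XOR, on booleans or on
   formulas in the input bits. *)
Definition frame := (('I_n -> T) * ('I_n -> T))%type.

Definition frame_gate (g : gate n) (s : frame) : frame :=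
  match g with
  | GH q => ([eta s.1 with q |-> s.2 q] : _ -> _, [eta s.2 with q |-> s.1 q] : _ -> _)
  | GS q => (s.1, [eta s.2 with q |-> xr (s.2 q) (s.1 q)] : _ -> _)
  | GT _ => s
  | GCNOT c t => ([eta s.1 with t |-> xr (s.1 t) (s.1 c)] : _ -> _,
                  [eta s.2 with c |-> xr (s.2 c) (s.2 t)] : _ -> _)
  end.

(* The second component lists the X-bits met at the T gates, in the order in
   which [run] consumes its T-bits. *)
Fixpoint frame_run (G : seq (gate n)) (s : frame) : frame * seq T :=
  if G is g :: G' then
    let r := frame_run G' s in
    (frame_gate g r.1, if g is GT q then r.1.1 q :: r.2 else r.2)
  else (s, [::]).

Lemma frame_run_cat G1 G2 s :
  frame_run (G1 ++ G2) s =
  ((frame_run G1 (frame_run G2 s).1).1,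
   (frame_run G1 (frame_run G2 s).1).2 ++ (frame_run G2 s).2).
Proof.
elim: G1 => [|g G IH]; first by case: (frame_run G2 s).
by rewrite /= IH /=; case: g.
Qed.

Lemma size_frame_run G s : size (frame_run G s).2 = count (@is_T n) G.
Proof. by elim: G => [|[q|q|q|c t] G IH] //=; rewrite IH. Qed.

Lemma frame_gate_out g s j : j \notin gate_support g ->
  (frame_gate g s).1 j = s.1 j /\ (frame_gate g s).2 j = s.2 j.
Proof.
case: g => [q|q|q|c t]; rewrite /= ?inE ?negb_or => //.
- by move/negbTE => ->.
- by move/negbTE => ->.
- by case/andP => /negbTE -> /negbTE ->.
Qed.

Lemma frame_run_out G s j : j \notin flatten (map (@gate_support n) G) ->
  (frame_run G s).1.1 j = s.1 j /\ (frame_run G s).1.2 j = s.2 j.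
Proof.
elim: G => [|g G IH] //=; rewrite mem_cat negb_or => /andP [j_g /IH [<- <-]].
exact: frame_gate_out.
Qed.

Definition map_frame T' (f : T -> T') (s : frame) : (('I_n -> T') * ('I_n -> T'))%type :=
  (fun j => f (s.1 j), fun j => f (s.2 j)).

End Frame.

Lemma frame_run_map (n : nat) (T T' : Type) (xr : T -> T -> T) (xr' : T' -> T' -> T')
    (f : T -> T') : (forall u v, f (xr u v) = xr' (f u) (f v)) ->
  forall (G : seq (gate n)) (s : frame n T),
  frame_run xr' G (map_frame f s) =
  (map_frame f (frame_run xr G s).1, map f (frame_run xr G s).2).
Proof.
move=> f_morph; elim=> [|g G IH] s //=; rewrite IH /=.
by case: g => [q|q|q|c t]; congr pair; rewrite /map_frame /=; congr pair;
  apply: functional_extensionality => j /=; case: (j == _); rewrite ?f_morph.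
Qed.

Section PauliPropagation.
Variable n : nat.
Implicit Types (a b u : 'I_n -> bool) (q c t : 'I_n) (v w : vec n) (y : bits n).

Definition dot b u : bool := \big[addb/false]_j (b j && u j).

Definition pauli a b w : vec n :=
  fun y => (-1) ^+ dot b (xorbits y a) * w (xorbits y a).

Lemma dot_off q b b' u u' : (forall j, j != q -> b' j && u' j = b j && u j) ->
  dot b' u' = dot b u (+) (b q && u q) (+) (b' q && u' q).
Proof.
move=> off_q; rewrite /dot (bigD1 q) // [in RHS](bigD1 q) //= (eq_bigr _ off_q).
by case: (b q && u q); case: (b' q && u' q); case: (\big[_/_]_(_ | _) _).
Qed.

Lemma dot_setbit b (u : bits n) q e :
  dot b (setbit u q e) = dot b u (+) (b q && u q) (+) (b q && e).
Proof.
rewrite (@dot_off q b b u) => [|j jq]; first by rewrite ffunE /= eqxx.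
by rewrite ffunE /= (negbTE jq).
Qed.

Lemma push_H q a b w y :
  apply_op (gate_amp (GH q)) (pauli a b w) y =
  (-1) ^+ (a q && b q) * pauli (frame_gate addb (GH q) (a, b)).1
                               (frame_gate addb (GH q) (a, b)).2
                               (apply_op (gate_amp (GH q)) w) y.
Proof.
rewrite /pauli !apply_H.
set a' := (frame_gate _ _ _).1; set b' := (frame_gate _ _ _).2.
have a'E j : j != q -> a' j = a j by move=> jq; rewrite /a' /= (negbTE jq).
rewrite !(xorbits_setbit _ _ a'E); set u := xorbits y a'.
have uq : u q = y q (+) b q by rewrite ffunE /a' /= eqxx.
have b'E : dot b' u = dot b u (+) (b q && u q) (+) (a q && u q).
  rewrite (@dot_off q b b' u u) => [|j jq]; first by rewrite /b' /= eqxx.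
  by rewrite /b' /= (negbTE jq).
rewrite !dot_setbit b'E !signr_addb uq.
by case: (a q); case: (b q); case: (y q); rewrite /=; ring.
Qed.

Lemma dot_cnot_bits c t b (u : bits n) : c != t ->
  dot [eta b with c |-> b c (+) b t] u = dot b (cnot_bits c t u).
Proof.
move=> ct; rewrite (@dot_off c b _ u u) => [|j jc]; last by rewrite /= (negbTE jc).
rewrite [RHS](@dot_off t b b u) => [|j jt]; last by rewrite ffunE /= (negbTE jt).
rewrite /= eqxx ffunE /= eqxx.
by case: (b c); case: (b t); case: (u c); case: (u t); case: (dot b u).
Qed.

Lemma push_CNOT c t a b w y : c != t ->
  apply_op (gate_amp (GCNOT c t)) (pauli a b w) y =
  pauli (frame_gate addb (GCNOT c t) (a, b)).1 (frame_gate addb (GCNOT c t) (a, b)).2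
        (apply_op (gate_amp (GCNOT c t)) w) y.
Proof.
move=> ct; rewrite /pauli !apply_CNOT //=.
by rewrite dot_cnot_bits // cnot_bits_xor.
Qed.

Lemma expr_i_addb (e y : bool) :
  'i ^+ y = 'i ^+ e * (-1) ^+ (e && (y (+) e)) * 'i ^+ (y (+) e) :> algC.
Proof.
case: e; case: y; rewrite /= ?expr0 ?expr1 ?mulr1 ?mul1r //.
by rewrite mulrN1 mulNr -expr2 sqrCi opprK.
Qed.

Lemma push_S q a b w y :
  apply_op (gate_amp (GS q)) (pauli a b w) y =
  'i ^+ a q * pauli (frame_gate addb (GS q) (a, b)).1 (frame_gate addb (GS q) (a, b)).2
                    (apply_op (gate_amp (GS q)) w) y.
Proof.
rewrite /pauli !apply_S [(frame_gate _ _ _).1]/=.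
set b' := (frame_gate _ _ _).2; set u := xorbits y a.
have uq : u q = y q (+) a q by rewrite ffunE.
rewrite (@dot_off q b b' u u) => [|j jq]; last by rewrite /b' /= (negbTE jq).
rewrite /b' /= eqxx uq (expr_i_addb (a q)) !signr_addb.
by case: (a q); case: (b q); case: (y q); rewrite /=; ring.
Qed.

Lemma expr_omega8_addb (e y : bool) :
  omega8 ^+ y = omega8 ^+ e * t_phase e ^+ (y (+) e).
Proof.
by case: e; case: y; rewrite /t_phase /= ?expr0 ?expr1 ?mulr1 ?mul1r ?mulfV ?omega8_neq0.
Qed.

Lemma push_T q a b w y :
  t_act q false (pauli a b w) y = omega8 ^+ a q * pauli a b (t_act q (a q) w) y.
Proof.
rewrite /pauli /t_act ffunE [t_phase false]/t_phase (expr_omega8_addb (a q) (y q)).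
by ring.
Qed.

Lemma run_pauli G a b w : all (fun g => uniq (gate_support g)) G ->
  exists2 l : algC, l != 0 &
  run G [::] (pauli a b w) =
  fun y => l * pauli (frame_run addb G (a, b)).1.1 (frame_run addb G (a, b)).1.2
                     (run G (frame_run addb G (a, b)).2 w) y.
Proof.
elim: G => [|g G IH] /=.
  by exists 1; rewrite ?oner_neq0 //; apply: functional_extensionality => y; rewrite mul1r.
case/andP => wf_g /IH [l l_neq0].
case: (frame_run addb G (a, b)) => [[a' b'] s] /= run_G.
case: g wf_g => [q|q|q|c t] wf_g /=; rewrite run_G ?apply_op_scale.
- exists (l * (-1) ^+ (a' q && b' q)); first by rewrite mulf_neq0 ?signr_eq0.
  by apply: functional_extensionality => y; rewrite push_H mulrA.
- exists (l * 'i ^+ a' q); first by rewrite mulf_neq0 ?expf_neq0 ?neq0Ci.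
  by apply: functional_extensionality => y; rewrite push_S mulrA.
- exists (l * omega8 ^+ a' q); first by rewrite mulf_neq0 ?expf_neq0 ?omega8_neq0.
  apply: functional_extensionality => y.
  by rewrite -mulrA -push_T /t_act mulrCA.
- exists l => //; apply: functional_extensionality => y.
  by rewrite push_CNOT //; move: wf_g; rewrite /= inE andbT.
Qed.

Lemma pauli_basis (x : bits n) :
  pauli (fun j => x j) (fun=> false) (basis [ffun=> false]) = basis x.
Proof.
apply: functional_extensionality => y; rewrite /pauli /basis /dot big1 // mul1r.
rewrite (can2_eq (xorbitsK _) (xorbitsK _)).
by congr (_ == _)%:R; apply/ffunP => j; rewrite !ffunE.
Qed.

End PauliPropagation.

Section Formulas.
Variables (n : nat) (i0 : 'I_n).
Local Open Scope nat_scope.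

Definition bxor (u v : bform n) : bform n := BAnd (BOr u v) (BNot (BAnd u v)).

(* The gate basis has no constants: they are built from the input [i0]. *)
Definition bconst (e : bool) : bform n :=
  if e then BOr (BVar i0) (BNot (BVar i0)) else BAnd (BVar i0) (BNot (BVar i0)).

Lemma beval_bxor u v x : beval (bxor u v) x = beval u x (+) beval v x.
Proof. by rewrite /=; case: (beval u x); case: (beval v x). Qed.

Lemma bdepth_bxor u v : bdepth (bxor u v) = maxn (bdepth u) (bdepth v) + 3.
Proof. rewrite /=; lia. Qed.

Lemma beval_bconst e x : beval (bconst e) x = e.
Proof. by case: e; rewrite /= ?orbN ?andbN. Qed.

Lemma bdepth_bconst e : bdepth (bconst e) = 2.
Proof. by case: e. Qed.

Fixpoint bmux (fs : seq (bform n)) (F : seq bool -> bool) : bform n :=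
  if fs is f :: fs' then
    BOr (BAnd f (bmux fs' (fun s => F (true :: s))))
        (BAnd (BNot f) (bmux fs' (fun s => F (false :: s))))
  else bconst (F [::]).

Lemma beval_bmux fs F x : beval (bmux fs F) x = F [seq beval f x | f <- fs].
Proof.
elim: fs F => [|f fs IH] F /=; first exact: beval_bconst.
by rewrite !IH; case: (beval f x); rewrite /= ?orbF.
Qed.

Lemma bdepth_bmux fs F D : all (fun f => bdepth f <= D) fs ->
  bdepth (bmux fs F) <= D + 2 * size fs + 2.
Proof.
elim: fs F => [|f fs IH] F /=; first by rewrite bdepth_bconst; lia.
case/andP => f_le fs_le.
have := IH (fun s => F (true :: s)) fs_le; have := IH (fun s => F (false :: s)) fs_le.
lia.
Qed.

End Formulas.

Section FrameDepth.
Variable n : nat.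
Local Open Scope nat_scope.

Definition frame_depth_le D (s : frame n (bform n)) :=
  forall j, bdepth (s.1 j) <= D /\ bdepth (s.2 j) <= D.

Lemma frame_gate_depth (g : gate n) (s : frame n (bform n)) D :
  (forall j, j \in gate_support g -> bdepth (s.1 j) <= D /\ bdepth (s.2 j) <= D) ->
  forall j, j \in gate_support g ->
  bdepth ((frame_gate (@bxor n) g s).1 j) <= D + 3 /\
  bdepth ((frame_gate (@bxor n) g s).2 j) <= D + 3.
Proof.
case: g => [q|q|q|c t] /= s_le j.
1-3: have [q1 q2] := s_le q (mem_head _ _);
     by rewrite inE => /eqP ->; rewrite ?eqxx ?bdepth_bxor; lia.
have [c1 c2] := s_le c (mem_head _ _).
have [t1 t2] : bdepth (s.1 t) <= D /\ bdepth (s.2 t) <= D.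
  by apply: s_le; rewrite !inE eqxx orbT.
rewrite !inE => /orP [] /eqP ->; rewrite eqxx;
  by case: ifP => _; rewrite !bdepth_bxor; lia.
Qed.

Lemma frame_layer_depth (L : layer n) s D :
  uniq (flatten (map (@gate_support n) L)) -> frame_depth_le D s ->
  frame_depth_le (D + 3) (frame_run (@bxor n) L s).1 /\
  all (fun f => bdepth f <= D) (frame_run (@bxor n) L s).2.
Proof.
elim: L => [|g L IH] /= uniq_L s_le.
  by split => // j; have := s_le j; lia.
move: uniq_L; rewrite cat_uniq => /and3P [_ disj /IH /(_ s_le) [L_le L_T]].
have {disj}L_fix j : j \in gate_support g ->
    (frame_run (@bxor n) L s).1.1 j = s.1 j /\ (frame_run (@bxor n) L s).1.2 j = s.2 j.
  by move=> jg; apply: frame_run_out; exact: contraL ((hasPn disj) j) jg.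
split.
- move=> j; have [jg|jg] := boolP (j \in gate_support g).
  + by apply: frame_gate_depth jg => k kg; have [-> ->] := L_fix k kg.
  + by have [-> ->] := frame_gate_out (@bxor n) (frame_run (@bxor n) L s).1 jg.
- case: g L_fix => [q|q|q|c t] L_fix //=.
  by rewrite L_T andbT; have [-> _] := L_fix q (mem_head _ _); case: (s_le q).
Qed.

Lemma frame_circuit_depth (Q : qcircuit n) s D : qcircuit_ok Q -> frame_depth_le D s ->
  frame_depth_le (D + 3 * size Q) (frame_run (@bxor n) (circuit_gates Q) s).1 /\
  all (fun f => bdepth f <= D + 3 * size Q) (frame_run (@bxor n) (circuit_gates Q) s).2.
Proof.
elim: Q s D => [|L Q IH] s D /=; first by move=> _ s_le; rewrite addn0.
case/andP => /andP [_ /frame_layer_depth L_depth] /IH Q_depth /L_depth [L_le L_T].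
rewrite /circuit_gates rev_cons flatten_rcons frame_run_cat -/(circuit_gates Q).
have [Q_le Q_T] := Q_depth _ _ L_le.
have -> : D + 3 * (size Q).+1 = D + 3 + 3 * size Q by lia.
split => //; rewrite all_cat Q_T /=; apply: sub_all L_T => f /=; lia.
Qed.

End FrameDepth.

Section Simulation.
Variables (n : nat) (i0 : 'I_n) (Q : qcircuit n).
Local Notation G := (circuit_gates Q).

Definition sym_frame := frame_run (@bxor n) G (fun j => BVar j, fun=> bconst i0 false).

Definition witness (s : seq bool) : bits n :=
  odflt [ffun=> false] [pick w | run G s (basis [ffun=> false]) w != 0].

Definition sim_circuit : ccircuit n :=
  fun i => bxor (sym_frame.1.1 i) (bmux i0 sym_frame.2 (fun s => witness s i)).

Lemma sim_circuit_depth :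
  qcircuit_ok Q -> (cdepth sim_circuit <= 3 * size Q + 2 * T_count Q + 7)%N.
Proof.
move=> okQ; apply/bigmax_leqP => i _; rewrite bdepth_bxor.
have init_le : frame_depth_le 2 (fun j => BVar j, fun=> bconst i0 false).
  by move=> j; split.
have [frame_le T_le] := frame_circuit_depth okQ init_le.
have := bdepth_bmux i0 (fun s => witness s i) T_le.
have -> : size sym_frame.2 = T_count Q.
  by rewrite size_frame_run count_flatten map_rev sumn_rev.
have := (frame_le i).1; rewrite -/sym_frame; lia.
Qed.

Lemma sim_circuit_correct : qcircuit_ok Q -> p_simulates sim_circuit Q.
Proof.
move=> okQ x; rewrite qc_amp_basis apply_qc_amp -pauli_basis.
have wf := circuit_gates_wf okQ.
pose f (phi : bform n) := beval phi x.
have eval_frame := @frame_run_map _ _ _ (@bxor n) addb f (fun u v => beval_bxor u v x) G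
                                 (fun j => BVar j, fun=> bconst i0 false).
have init :
    map_frame f (fun j => BVar j, fun=> bconst i0 false) = (fun j => x j, fun=> false).
  by congr pair; apply: functional_extensionality => j; rewrite /f beval_bconst.
rewrite init -/sym_frame in eval_frame.
have [l l_neq0 ->] := run_pauli (fun j => x j) (fun=> false) (basis [ffun=> false]) wf.
rewrite eval_frame /pauli mulf_neq0 // mulf_neq0 ?signr_eq0 //=.
have -> : xorbits (ceval sim_circuit x) (fun j => f (sym_frame.1.1 j)) =
          witness [seq f phi | phi <- sym_frame.2].
  by apply/ffunP => j; rewrite !ffunE beval_bxor beval_bmux addbAC addbb.
rewrite /witness; case: pickP => [w //|no_w].
have basis_neq0 : exists z : bits n, basis [ffun=> false] z != 0.
  by exists [ffun=> false]; rewrite /basis eqxx oner_neq0.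
have [y] := run_neq0 [seq f phi | phi <- sym_frame.2] wf basis_neq0.
by rewrite no_w.
Qed.

End Simulation.

Theorem corollary1 :
  exists c : nat, (0 < c)%N /\
  forall (n d t : nat) (Q : qcircuit n),
    (1 <= n)%N -> (1 <= d)%N ->
    qcircuit_ok Q -> qdepth Q = d -> T_count Q = t ->
    exists C : ccircuit n, (cdepth C <= c * (d + t))%N /\ p_simulates C Q.
Proof.
exists 10; split => // n d t Q n_ge1 d_ge1 okQ depthQ countQ.
exists (sim_circuit (Ordinal n_ge1) Q); split; last exact: sim_circuit_correct.
have := sim_circuit_depth (Ordinal n_ge1) okQ; rewrite -/(qdepth Q) depthQ countQ.
lia.
Qed.
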